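(* Consider the multicast coalitional game with player set $\mathcal{N}=\{1,\ldots,N\}$, $N\ge2$, and value function $$v(S)=\sum_{i\in S}U_i-\sum_{i\in S}\frac{\alpha_i}{R_S}-\frac{\beta+\gamma}{R_S},\qquad R_S=\min_{i\in S}R_i,$$ for nonempty $S\subseteq\mathcal{N}$. Suppose $P_{Rx,i}=P_{Rx}$ for all $i$, so that $\alpha_i=\alpha:=aP_{Rx}X$ for all $i$. Let $k\in\arg\min_{i\in\mathcal{N}}R_i$ and $j\in\arg\min_{i\in\mathcal{N}\setminus\{k\}}R_i$, and write $R_j=\lambda R_k$ with $\lambda\ge1$ (so $R_k$ and $R_j$ are the minimum and second minimum rates). If $$\lambda>1+\frac{\beta+\gamma}{\alpha(N-1)},$$ then the core is empty.
   Context: A transmitter multicasts a file of size $X>0$ bits to users $\mathcal{N}=\{1,\dots,N\}$. User $i$ has valuation $U_i\in\mathbb{R}$, downloads at rate $R_i>0$, and consumes receive power $P_{Rx,i}>0$; the transmitter transmits at power $P_{Tx}>0$. Costs per unit energy are $a>0$ at users and $b>0$ at the transmitter; bandwidth cost per second is $w>0$. Set $\alpha_i=aP_{Rx,i}X$, $\beta=bP_{Tx}X$, $\gamma=wX$. The core is the set of payoff vectors $(x_1,\dots,x_N)\in\mathbb{R}^N$ with $\sum_{i\in\mathcal{N}}x_i=v(\mathcal{N})$ and $\sum_{i\in S}x_i\ge v(S)$ for every nonempty $S\subseteq\mathcal{N}$. *)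

From mathcomp Require Import all_boot all_order all_algebra.
Set Implicit Arguments. Unset Strict Implicit. Unset Printing Implicit Defensive.
Import Order.TTheory GRing.Theory Num.Theory.
Local Open Scope ring_scope.

(* R_S = min_{i in S} Rate i  (meaningful for nonempty S). *)
Definition minRate (F : realFieldType) (N : nat) (Rate : 'I_N -> F)
    (S : {set 'I_N}) : F :=
  let s := [seq Rate i | i <- enum S] in foldr Num.min (head 0 s) s.

Definition mc_value (F : realFieldType) (N : nat) (U alpha Rate : 'I_N -> F)
    (beta gamma : F) (S : {set 'I_N}) : F :=
  \sum_(i in S) U i - \sum_(i in S) alpha i / minRate Rate S
  - (beta + gamma) / minRate Rate S.

Definition core (F : realFieldType) (N : nat) (v : {set 'I_N} -> F)
    (x : 'I_N -> F) : Prop :=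
  \sum_(i < N) x i = v [set: 'I_N] /\
  forall S : {set 'I_N}, S != set0 -> v S <= \sum_(i in S) x i.

From mathcomp Require Import all_boot all_order all_algebra.
From mathcomp Require Import ring lra.
Import Order.TTheory GRing.Theory Num.Theory.
Local Open Scope ring_scope.

(* A core allocation gives v(N) >= v({k}) + v(C) for C = N \ {k}.  Serving C
   separately raises its common rate from R_k to R_j, which saves its N - 1
   users (N - 1) alpha (1/R_k - 1/R_j) of receive cost; under the stated margin
   this saving exceeds the fixed cost (beta + gamma) / R_j of the extra
   transmission, so v is not superadditive on this split. *)

Lemma core_le_split {F : realFieldType} {N : nat} {v : {set 'I_N} -> F}
    {x : 'I_N -> F} {S : {set 'I_N}} :
  core v x -> S != set0 -> ~: S != set0 -> v S + v (~: S) <= v [set: 'I_N].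
Proof.
move=> [sum_x core_x] S0 CS0; rewrite -sum_x (bigID (mem S)) /=.
have -> : \sum_(i < N | i \notin S) x i = \sum_(i in ~: S) x i.
  by apply: eq_bigl => i; rewrite in_setC.
by rewrite lerD ?core_x.
Qed.

Section MinRate.

Variables (d : Order.disp_t) (T : orderType d).

Lemma foldr_min_ge (m e : T) (s : seq T) :
  (m <= e)%O -> all (fun y => m <= y)%O s -> (m <= foldr Order.min e s)%O.
Proof.
move=> me; elim: s => [|y s IH] //= /andP[my ms].
by rewrite le_min my IH.
Qed.

Lemma foldr_min_le (y e : T) (s : seq T) :
  y \in s -> (foldr Order.min e s <= y)%O.
Proof.
elim: s => [|z s IH] //=; rewrite in_cons => /orP[/eqP->|ys].
  by rewrite ge_min lexx.
by rewrite ge_min IH ?orbT.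
Qed.

End MinRate.

Lemma minRate_eq (F : realFieldType) (N : nat) (Rate : 'I_N -> F)
    (S : {set 'I_N}) (i0 : 'I_N) :
  i0 \in S -> (forall i, i \in S -> Rate i0 <= Rate i) ->
  minRate Rate S = Rate i0.
Proof.
move=> Si0 i0_min; rewrite /minRate.
set s := [seq Rate i | i <- enum S].
have s_i0 : Rate i0 \in s by apply: map_f; rewrite mem_enum.
have s_ge : all (fun y => Rate i0 <= y) s.
  by apply/allP => y /mapP[i]; rewrite mem_enum => Si ->; apply: i0_min.
apply/eqP; rewrite eq_le foldr_min_le // foldr_min_ge //.
by case: s s_i0 s_ge => [|y s] //= _ /andP[].
Qed.

Lemma mc_value_uniform {F : realFieldType} {N : nat} (U : 'I_N -> F)
    {alpha : 'I_N -> F} (Rate : 'I_N -> F) {al : F} (beta gamma : F) :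
  (forall i, alpha i = al) -> forall S : {set 'I_N},
  mc_value U alpha Rate beta gamma S
  = \sum_(i in S) U i - (#|S|%:R * al + (beta + gamma)) / minRate Rate S.
Proof.
move=> alphaE S; rewrite /mc_value.
have -> : \sum_(i in S) alpha i / minRate Rate S = #|S|%:R * al / minRate Rate S.
  under eq_bigr do rewrite alphaE.
  by rewrite sumr_const -[RHS]mulrA mulr_natl.
by rewrite [in RHS]mulrDl opprD addrA.
Qed.

Lemma mc_value_split_gt {F : realFieldType} {N : nat}
    (U : 'I_N -> F) {alpha Rate : 'I_N -> F} {al : F} (beta gamma : F)
    {k j : 'I_N} :
    (forall i, alpha i = al) -> (forall i, 0 < Rate i) ->
    (forall i, Rate k <= Rate i) -> j != k ->
    (forall i, i != k -> Rate j <= Rate i) ->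
    (beta + gamma) * Rate k < (N - 1)%:R * al * (Rate j - Rate k) ->
  mc_value U alpha Rate beta gamma [set: 'I_N]
  < mc_value U alpha Rate beta gamma [set k]
    + mc_value U alpha Rate beta gamma (~: [set k]).
Proof.
move=> alphaE Rate_gt0 k_min jk j_min gain.
set C := ~: [set k]; set B := beta + gamma; set c : F := (N - 1)%:R.
have minT : minRate Rate [set: 'I_N] = Rate k.
  by apply: minRate_eq => [|i _]; rewrite ?in_setT.
have min1 : minRate Rate [set k] = Rate k.
  by apply: minRate_eq => [|i]; rewrite in_set1 // => /eqP->.
have minC : minRate Rate C = Rate j.
  by apply: minRate_eq => [|i]; rewrite in_setC in_set1 // => /j_min.
have cardC : #|C| = (N - 1)%N by rewrite cardsC1 card_ord subn1.
have cardT : #|[set: 'I_N]|%:R = c + 1 :> F.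
  by rewrite cardsT -(cardsC [set k]) cards1 -/C cardC natrD addrC.
have sumU : \sum_(i in [set: 'I_N]) U i = U k + \sum_(i in C) U i.
  rewrite (bigD1 k) ?in_setT //=; congr (_ + _).
  by apply: eq_bigl => i; rewrite in_setT in_setC in_set1.
rewrite !(mc_value_uniform U Rate beta gamma alphaE) minT min1 minC cardT cards1.
rewrite cardC big_set1 sumU -/c -/B.
have Rk := Rate_gt0 k; have Rj := Rate_gt0 j.
suff saving : (c * al + B) / Rate j < c * al / Rate k.
  have -> : (c + 1) * al + B = c * al + (1 * al + B) by ring.
  rewrite mulrDl; lra.
rewrite ltr_pdivrMr // mulrAC ltr_pdivlMr // mulrDl.
by move: gain; rewrite -/B -/c mulrBr; lra.
Qed.

Theorem theorem5 (F : realFieldType) (N : nat) (hN : (2 <= N)%N)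
    (X : F) (U Rate PRx : 'I_N -> F) (PTx a b w PRx0 : F)
    (hX : 0 < X) (hRate : forall i, 0 < Rate i) (hPRx : forall i, 0 < PRx i)
    (hPTx : 0 < PTx) (ha : 0 < a) (hb : 0 < b) (hw : 0 < w)
    (hPRxc : forall i, PRx i = PRx0)
    (k j : 'I_N) (hk : forall i, Rate k <= Rate i)
    (hjk : j != k) (hj : forall i, i != k -> Rate j <= Rate i)
    (lambda : F) (hlam1 : 1 <= lambda) (hlam : Rate j = lambda * Rate k)
    (hcond : 1 + (b * PTx * X + w * X) / (a * PRx0 * X * (N - 1)%:R) < lambda) :
  ~ (exists x : 'I_N -> F,
        core (mc_value U (fun i => a * PRx i * X) Rate (b * PTx * X) (w * X)) x).
Proof.
move=> [x core_x].
set al := a * PRx0 * X; set B := b * PTx * X + w * X; set c : F := (N - 1)%:R.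
have alphaE i : a * PRx i * X = al by rewrite hPRxc.
have al_gt0 : 0 < al by rewrite -(alphaE k) !mulr_gt0.
have c_gt0 : 0 < c by rewrite ltr0n subn_gt0.
have gain : B * Rate k < c * al * (Rate j - Rate k).
  have margin : B < (lambda - 1) * (al * c).
    rewrite -ltr_pdivrMr; last exact: mulr_gt0.
    by move: hcond; rewrite -/al -/B -/c; lra.
  suff -> : c * al * (Rate j - Rate k) = (lambda - 1) * (al * c) * Rate k.
    by rewrite ltr_pM2r.
  by rewrite hlam; ring.
have k_ne0 : [set k] != set0 by apply/set0Pn; exists k; rewrite inE.
have Ck_ne0 : ~: [set k] != set0 by apply/set0Pn; exists j; rewrite !inE.
have := core_le_split core_x k_ne0 Ck_ne0.
by rewrite leNgt
  (mc_value_split_gt U (b * PTx * X) (w * X) alphaE hRate hk hjk hj gain).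
Qed.
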